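(* Let $\mathcal{D}_n=(Q,\Sigma,\delta,0,F)$ with $Q=\{0,\dots,n-1\}$ be a minimal complete DFA accepting a suffix-free language $L$, with empty state $n-1$, and let $T$ be its transition semigroup. Then every semiconstant transformation $(S\to q)$ belonging to $T$ satisfies $0\in S$ and $q=n-1$. Moreover, if $T$ is maximal (i.e. no minimal complete DFA with state set $Q$, initial state $0$ and empty state $n-1$ accepting a suffix-free language has a transition semigroup properly containing $T$), then every semiconstant transformation $(S\to n-1)$ with $0\in S$ belongs to $T$.
   Context: A language $L$ is suffix-free if whenever $w\in L$ and $u\in L$ with $u$ a suffix of $w$, then $u=w$. Transformations act on the right. The transition semigroup of a DFA is the semigroup of transformations of its state set generated by the transformations induced by its letters. A minimal complete DFA of a suffix-free language with $n\ge2$ states has exactly one empty state (a state from which no final state is reachable), labeled $n-1$. A transformation $t$ of $Q$ is semiconstant, written $(S\to q)$, if for some nonempty $S\subseteq Q$ and $q\in Q$ it maps every state of $S$ to $q$ and fixes every state of $Q\setminus S$. *)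

From mathcomp Require Import all_boot.
Set Implicit Arguments. Unset Strict Implicit. Unset Printing Implicit Defensive.

Section DFA.
Variables (n : nat) (Sigma : finType).

(* A complete DFA over the states Q = 'I_n: delta a q is the image of q under
   letter a.  Transformations act on the right: q.(a1 a2 ... ak) =
   delta ak (... (delta a1 q)). *)
Definition run (delta : Sigma -> 'I_n -> 'I_n) (q : 'I_n) (w : seq Sigma) : 'I_n :=
  foldl (fun p a => delta a p) q w.

Definition lang (delta : Sigma -> 'I_n -> 'I_n) (i0 : 'I_n) (F : {set 'I_n})
  (w : seq Sigma) : Prop := run delta i0 w \in F.

(* suffix u w (seq.v): u is a suffix of w. *)
Definition suffix_free (L : seq Sigma -> Prop) : Prop :=
  forall w u, L w -> L u -> suffix u w -> u = w.

Definition minimal_dfa (delta : Sigma -> 'I_n -> 'I_n) (i0 : 'I_n) (F : {set 'I_n}) :=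
  (forall q, exists w, run delta i0 w = q) /\
  (forall p q : 'I_n, p != q ->
     exists w, (run delta p w \in F) != (run delta q w \in F)).

Definition empty_state (delta : Sigma -> 'I_n -> 'I_n) (F : {set 'I_n}) (q : 'I_n) :=
  forall w, run delta q w \notin F.

Definition sf_min_dfa (delta : Sigma -> 'I_n -> 'I_n) (i0 : 'I_n) (F : {set 'I_n}) :=
  [/\ nat_of_ord i0 = 0,
      minimal_dfa delta i0 F,
      suffix_free (lang delta i0 F) &
      exists e : 'I_n, nat_of_ord e = n.-1 /\ empty_state delta F e].

Definition in_tsg (delta : Sigma -> 'I_n -> 'I_n) (t : {ffun 'I_n -> 'I_n}) : Prop :=
  exists w : seq Sigma, w != [::] /\ t = [ffun q => run delta q w].

End DFA.

Definition semiconst (n : nat) (S : {set 'I_n}) (q : 'I_n) : {ffun 'I_n -> 'I_n} :=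
  [ffun x => if x \in S then q else x].

Definition maximal_tsg (n : nat) (T : {ffun 'I_n -> 'I_n} -> Prop) : Prop :=
  forall (Sigma' : finType) (delta' : Sigma' -> 'I_n -> 'I_n) (i0' : 'I_n)
         (F' : {set 'I_n}),
    sf_min_dfa delta' i0' F' ->
    ~ ((forall t, T t -> in_tsg delta' t) /\
       (exists t, in_tsg delta' t /\ ~ T t)).

From mathcomp Require Import all_boot.
From Stdlib Require Import Classical.

Set Implicit Arguments. Unset Strict Implicit. Unset Printing Implicit Defensive.

(* Everything rests on one observation: if a nonempty word w leads from the
   initial state to q and fixes q, then q is empty, for otherwise some v would
   make both w w v and its proper suffix w v accepted.  Applied to a
   semiconstant (S -> q) in the transition semigroup, this forces 0 into S
   (else 0 is a fixed point) and makes q the empty state.  Conversely, adding a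
   letter acting as (S -> n-1) with 0 in S keeps the DFA minimal and the
   language suffix-free, since that letter can occur in an accepting word only
   at states outside S, where it acts trivially; by maximality the new
   transformation was already in the semigroup. *)

Lemma cat_eq_id_nil (T : Type) (x u : seq T) : x ++ u = u -> x = [::].
Proof.
move/(congr1 size)/eqP; rewrite size_cat -[X in _ == X]add0n eqn_add2r.
by move/eqP/size0nil.
Qed.

Section Run.
Variables (n : nat) (Sigma : finType) (delta : Sigma -> 'I_n -> 'I_n).

Lemma run_cat q x y : run delta q (x ++ y) = run delta (run delta q x) y.
Proof. by rewrite /run foldl_cat. Qed.

Lemma run_sink e : (forall a, delta a e = e) -> forall w, run delta e w = e.
Proof. by move=> He; elim=> //= a w; rewrite He. Qed.

Variable F : {set 'I_n}.

Lemma empty_state_unique p q :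
  (forall p q : 'I_n, p != q ->
     exists w, (run delta p w \in F) != (run delta q w \in F)) ->
  empty_state delta F p -> empty_state delta F q -> p = q.
Proof.
move=> Hdist Hp Hq; apply/eqP/negPn/negP => /Hdist [w].
by rewrite (negbTE (Hp w)) (negbTE (Hq w)).
Qed.

Lemma empty_state_sink i0 e a : minimal_dfa delta i0 F ->
  empty_state delta F e -> delta a e = e.
Proof.
case=> _ Hdist He; apply: (empty_state_unique Hdist) (He) => w.
exact: (He (a :: w)).
Qed.

Lemma suffix_free_loop_empty i0 w q : suffix_free (lang delta i0 F) ->
  w != [::] -> run delta i0 w = q -> run delta q w = q -> empty_state delta F q.
Proof.
move=> Hsf w0 Hi0 Hq v; apply/negP => Hv.
have Lwv : lang delta i0 F (w ++ v) by rewrite /lang run_cat Hi0.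
have Lwwv : lang delta i0 F (w ++ (w ++ v)) by rewrite /lang !run_cat Hi0 Hq.
have /esym/cat_eq_id_nil/eqP := Hsf _ _ Lwwv Lwv (suffix_suffix _ _).
by rewrite (negbTE w0).
Qed.

End Run.

Lemma sf_min_dfa_semiconst_in_tsg n (Sigma : finType)
    (delta : Sigma -> 'I_n -> 'I_n) i0 F S q :
  2 <= n -> sf_min_dfa delta i0 F -> in_tsg delta (semiconst S q) ->
  i0 \in S /\ nat_of_ord q = n.-1.
Proof.
move=> hn [h0 [_ Hdist] Hsf [e [he He]]] [w [w0 Ew]].
have Hw x : run delta x w = if x \in S then q else x.
  by have := congr1 (fun f : {ffun 'I_n -> 'I_n} => f x) Ew; rewrite !ffunE.
have i0S : i0 \in S.
  apply/negPn/negP => i0S.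
  have Hi0 : empty_state delta F i0.
    by apply: (suffix_free_loop_empty Hsf w0); rewrite Hw (negbTE i0S).
  move: he; rewrite (empty_state_unique Hdist He Hi0) h0.
  by case: (n) hn => [|[|]].
have Hq : empty_state delta F q.
  by apply: (suffix_free_loop_empty Hsf w0); rewrite Hw ?i0S //; case: ifP.
by rewrite (empty_state_unique Hdist Hq He).
Qed.

Section AddLetter.
Variables (n : nat) (Sigma : finType) (delta : Sigma -> 'I_n -> 'I_n).
Variable f : {ffun 'I_n -> 'I_n}.

Definition add_letter : option Sigma -> 'I_n -> 'I_n := oapp delta f.

Lemma run_add_letter_map q w : run add_letter q (map Some w) = run delta q w.
Proof. by elim: w q => //= a w IH q; apply: IH. Qed.

Lemma in_tsg_add_letter t : in_tsg delta t -> in_tsg add_letter t.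
Proof.
case=> w [w0 ->]; exists (map Some w); split; first by case: w w0.
by apply/ffunP => q; rewrite !ffunE run_add_letter_map.
Qed.

Lemma in_tsg_new_letter : in_tsg add_letter f.
Proof. by exists [:: None]; split => //; apply/ffunP => q; rewrite ffunE. Qed.

Lemma minimal_dfa_add_letter i0 F :
  minimal_dfa delta i0 F -> minimal_dfa add_letter i0 F.
Proof.
case=> Hreach Hdist; split=> [q | p q /Hdist [w Hw]].
  by have [w Hw] := Hreach q; exists (map Some w); rewrite run_add_letter_map.
by exists (map Some w); rewrite !run_add_letter_map.
Qed.

End AddLetter.

Section AddSemiconst.
Variables (n : nat) (Sigma : finType) (delta : Sigma -> 'I_n -> 'I_n).
Variables (S : {set 'I_n}) (e : 'I_n).
Hypothesis e_sink : forall a, delta a e = e.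

Local Notation delta' := (add_letter delta (semiconst S e)).

Lemma run_add_semiconst_sink w : run delta' e w = e.
Proof.
by apply: run_sink => -[a|] /=; rewrite ?e_sink // ffunE; case: ifP.
Qed.

(* Away from e, the new letter acts as the identity, so it can be erased. *)
Lemma run_add_semiconst_strip w q :
  run delta' q w != e -> run delta' q w = run delta q (pmap id w).
Proof.
elim: w q => //= -[a|] w IH q; rewrite /run /= -!/(run _ _ _) ?ffunE; first exact: IH.
by case: ifP => _; [rewrite run_add_semiconst_sink eqxx | apply: IH].
Qed.

Lemma suffix_free_add_semiconst i0 (F : {set 'I_n}) :
  e \notin F -> i0 \in S -> suffix_free (lang delta i0 F) ->
  suffix_free (lang delta' i0 F).
Proof.
move=> eF i0S Hsf w u Lw Lu /suffixP [x Ew]; subst w.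
have accept_strip v : lang delta' i0 F v -> lang delta i0 F (pmap id v).
  rewrite /lang => Lv; rewrite -run_add_semiconst_strip //.
  by apply: contraTneq Lv => ->.
have := Hsf _ _ (accept_strip _ Lw) (accept_strip _ Lu).
rewrite pmap_cat => /(_ (suffix_suffix _ _)) /esym/cat_eq_id_nil.
case: x Lw => // -[//|] x + _; rewrite /lang /run /= -/(run _ _ _) ffunE i0S.
by rewrite run_add_semiconst_sink (negbTE eF).
Qed.

Lemma sf_min_dfa_add_semiconst i0 F :
  sf_min_dfa delta i0 F -> nat_of_ord e = n.-1 -> empty_state delta F e ->
  i0 \in S -> sf_min_dfa delta' i0 F.
Proof.
move=> [h0 Hmin Hsf _] he He i0S; split=> //.
- exact: minimal_dfa_add_letter.
- exact: suffix_free_add_semiconst (He [::]) _ _.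
- by exists e; split=> // w; rewrite run_add_semiconst_sink; apply: (He [::]).
Qed.

End AddSemiconst.

Lemma maximal_tsg_superset n (T : {ffun 'I_n -> 'I_n} -> Prop)
    (Sigma : finType) (delta : Sigma -> 'I_n -> 'I_n) i0 F t :
  maximal_tsg T -> sf_min_dfa delta i0 F ->
  (forall t, T t -> in_tsg delta t) -> in_tsg delta t -> T t.
Proof.
move=> Hmax Hsf HT Ht; apply: NNPP => nTt.
by apply: (Hmax _ _ _ _ Hsf); split=> //; exists t.
Qed.

Theorem lemma5 (n : nat) (hn : 2 <= n) (Sigma : finType)
  (delta : Sigma -> 'I_n -> 'I_n) (i0 : 'I_n) (F : {set 'I_n}) :
  sf_min_dfa delta i0 F ->
  (forall (S : {set 'I_n}) (q : 'I_n), S != set0 ->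
     in_tsg delta (semiconst S q) ->
     (exists2 s, s \in S & nat_of_ord s = 0) /\ nat_of_ord q = n.-1) /\
  (maximal_tsg (in_tsg delta) ->
   forall (S : {set 'I_n}) (q : 'I_n),
     (exists2 s, s \in S & nat_of_ord s = 0) -> nat_of_ord q = n.-1 ->
     in_tsg delta (semiconst S q)).
Proof.
move=> Hsf; have [h0 Hmin _ [e [he He]]] := Hsf; split.
  move=> S q _ /(sf_min_dfa_semiconst_in_tsg hn Hsf) [i0S ->].
  by split=> //; exists i0.
move=> Hmax S q [s sS s0] hq.
have -> : q = e by apply: val_inj; rewrite /= hq he.
have i0S : i0 \in S by rewrite (_ : i0 = s) //; apply: val_inj; rewrite /= h0 s0.
have e_sink a : delta a e = e := empty_state_sink a Hmin He.
apply: (maximal_tsg_superset Hmax (sf_min_dfa_add_semiconst e_sink Hsf he He i0S)).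
- exact: in_tsg_add_letter.
- exact: in_tsg_new_letter.
Qed.
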